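(* For every $z\in\{1,\dots,m-1\}$: (i) for all integers $x\in[x_z,z]$, $d_F(\tau_{x,z},P[t_x,t_z])\le4\Delta$, and for all integers $y\in[z+1,y_z]$, $d_F(\tau_{z+1,y},P[t_{z+1},t_y])\le4\Delta$; (ii) for all integers $x\in[1,x_z)$, $d_F(\tau_{x,z},P[t_x,t_z])>2\Delta$, and for all integers $y\in(y_z,m]$, $d_F(\tau_{z+1,y},P[t_{z+1},t_y])>2\Delta$.
   Context: Let $d\ge1$ and let $P:[0,1]\to\mathbb R^d$ be a polygonal curve with breakpoint parameters $0=t_1<t_2<\dots<t_m=1$, and fix $\Delta>0$. For $0\le a\le b\le1$, $P[a,b]$ is the subcurve from $P(a)$ to $P(b)$. The Fréchet distance $d_F(P,Q)=\inf_\gamma\sup_{t\in[0,1]}\|P(\gamma(t))-Q(t)\|$, $\gamma$ over increasing homeomorphisms of $[0,1]$. For $1\le a\le b\le m$, $\tau_{a,b}$ is the segment from $P(t_a)$ to $P(t_b)$. For $z\in\{1,\dots,m-1\}$, $x_z$ is the smallest integer $x'\in\{1,\dots,z\}$ such that $d_F(\tau_{x,z},P[t_x,t_z])\le4\Delta$ for every integer $x\in[x',z]$, and $y_z$ is the largest integer $y'\in\{z+1,\dots,m\}$ such that $d_F(\tau_{z+1,y},P[t_{z+1},t_y])\le4\Delta$ for every integer $y\in[z+1,y']$. *)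

From HB Require Import structures.
From mathcomp Require Import all_boot all_order all_algebra.
From mathcomp Require Import all_classical all_reals all_analysis.
Set Implicit Arguments. Unset Strict Implicit. Unset Printing Implicit Defensive.
Import Order.TTheory GRing.Theory Num.Theory.
Import numFieldNormedType.Exports.
Local Open Scope classical_set_scope.
Local Open Scope ring_scope.

Definition enorm {R : realType} {d : nat} (v : 'rV[R]_d) : R :=
  Num.sqrt (\sum_(i < d) (v ord0 i) ^+ 2).

(* increasing homeomorphisms of [0,1]: continuous, strictly increasing,
   fixing 0 and 1 (values outside [0,1] are irrelevant) *)
Definition incr_homeo01 {R : realType} (g : R -> R) : Prop :=
  {within [set x : R | 0 <= x <= 1], continuous g} /\
  (forall s u, 0 <= s -> s < u -> u <= 1 -> g s < g u) /\
  g 0 = 0 /\ g 1 = 1.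

Definition frechet {R : realType} {d : nat} (A B : R -> 'rV[R]_d) : \bar R :=
  ereal_inf [set ereal_sup [set (enorm (A (g t) - B t))%:E | t in [set x : R | 0 <= x <= 1]]
            | g in [set g | incr_homeo01 g]].

(* breakpoints t_1 < ... < t_m with t_1 = 0 and t_m = 1 (indices 1..m) *)
Definition breakpoints {R : realType} (m : nat) (t : nat -> R) : Prop :=
  t 1%N = 0 /\ t m = 1 /\
  (forall i j, (1 <= i)%N -> (i < j)%N -> (j <= m)%N -> t i < t j).

Definition polygonal {R : realType} {d : nat} (m : nat) (t : nat -> R)
    (P : R -> 'rV[R]_d) : Prop :=
  forall i, (1 <= i)%N -> (i < m)%N ->
    forall s, t i <= s -> s <= t i.+1 ->
      P s = ((t i.+1 - s) / (t i.+1 - t i)) *: P (t i)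
            + ((s - t i) / (t i.+1 - t i)) *: P (t i.+1).

Definition subcurve {R : realType} {d : nat} (P : R -> 'rV[R]_d) (a b : R)
  : R -> 'rV[R]_d := fun s => P (a + s * (b - a)).

Definition tau {R : realType} {d : nat} (P : R -> 'rV[R]_d) (t : nat -> R)
  (a b : nat) : R -> 'rV[R]_d := fun s => (1 - s) *: P (t a) + s *: P (t b).

Definition dseg {R : realType} {d : nat} (P : R -> 'rV[R]_d) (t : nat -> R)
  (a b : nat) : \bar R := frechet (tau P t a b) (subcurve P (t a) (t b)).

Definition is_xz {R : realType} {d : nat} (P : R -> 'rV[R]_d) (t : nat -> R)
  (Delta : R) (z xz : nat) : Prop :=
  let good x' := (1 <= x')%N /\ (x' <= z)%N /\
      (forall x, (x' <= x)%N -> (x <= z)%N -> (dseg P t x z <= (4 * Delta)%:E)%E) in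
  good xz /\ (forall x', good x' -> (xz <= x')%N).

Definition is_yz {R : realType} {d : nat} (P : R -> 'rV[R]_d) (t : nat -> R)
  (Delta : R) (m z yz : nat) : Prop :=
  let good y' := (z.+1 <= y')%N /\ (y' <= m)%N /\
      (forall y, (z.+1 <= y)%N -> (y <= y')%N -> (dseg P t z.+1 y <= (4 * Delta)%:E)%E) in
  good yz /\ (forall y', good y' -> (y' <= yz)%N).

(* Part (i) is the defining property of x_z and y_z.  Part (ii) rests on one
   geometric fact: if the segment [p,q] is within Frechet distance c of a
   curve B, then for any 0 <= u0 < u1 <= 1 the chord from B(u0) to B(u1) is
   within 2c of the piece of B between u0 and u1 (frechet_chord).  Indeed,
   restricting and renormalising a near-optimal matching g gives a matching of
   the chord, and at each point the error is the g-error plus the affine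
   interpolation of the g-errors at u0 and u1, each at most c.  Applied with
   c = 2 Delta, a segment tau_{x,z} within 2 Delta of P[t_x,t_z] makes every
   inner tau_{x',z} within 4 Delta (dseg_inner), so x would be admissible,
   contradicting the minimality of x_z; symmetrically for y_z. *)

From HB Require Import structures.
From mathcomp Require Import all_boot all_order all_algebra.
From mathcomp Require Import all_classical all_reals all_analysis.
From mathcomp Require Import ring lra zify.
Import Order.TTheory GRing.Theory Num.Theory.
Import numFieldNormedType.Exports.
Local Open Scope classical_set_scope.
Local Open Scope ring_scope.

Section EuclideanNorm.
Context {R : realType} {d : nat}.
Implicit Types u v : 'rV[R]_d.

Lemma enorm_ge0 v : 0 <= enorm v.
Proof. exact: sqrtr_ge0. Qed.

Lemma enorm_sqr v : enorm v ^+ 2 = \sum_(i < d) (v ord0 i) ^+ 2.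
Proof. by rewrite sqr_sqrtr // sumr_ge0 // => i _; exact: sqr_ge0. Qed.

Lemma enorm0 : enorm (0 : 'rV[R]_d) = 0.
Proof. by rewrite /enorm big1 ?sqrtr0 // => i _; rewrite mxE expr0n. Qed.

Lemma enormZ c v : enorm (c *: v) = `|c| * enorm v.
Proof.
rewrite /enorm (eq_bigr (fun i => c ^+ 2 * (v ord0 i) ^+ 2)); last first.
  by move=> i _; rewrite mxE exprMn.
by rewrite -mulr_sumr sqrtrM ?sqr_ge0 // sqrtr_sqr.
Qed.

Lemma enorm_eq0_coord v : enorm v = 0 -> forall i, v ord0 i = 0.
Proof.
move=> v0 i; have sum0 : \sum_(j < d) (v ord0 j) ^+ 2 = 0.
  by rewrite -enorm_sqr v0 expr0n.
have /eqP := @psumr_eq0P R _ predT _ (fun j _ => sqr_ge0 (v ord0 j)) sum0 i isT.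
by rewrite sqrf_eq0 => /eqP.
Qed.

(* Cauchy-Schwarz: expand 0 <= sum_i (|v| u_i - |u| v_i)^2. *)
Lemma dot_le_enorm u v : \sum_(i < d) u ord0 i * v ord0 i <= enorm u * enorm v.
Proof.
have [u0|/negbTE un0] := eqVneq (enorm u) 0.
  by rewrite u0 mul0r big1 // => i _; rewrite (enorm_eq0_coord _ u0) mul0r.
have [v0|/negbTE vn0] := eqVneq (enorm v) 0.
  by rewrite v0 mulr0 big1 // => i _; rewrite (enorm_eq0_coord _ v0) mulr0.
have up : 0 < enorm u by rewrite lt_def un0 enorm_ge0.
have vp : 0 < enorm v by rewrite lt_def vn0 enorm_ge0.
set S := \sum_(i < d) _.
have expand : \sum_(i < d) (enorm v * u ord0 i - enorm u * v ord0 i) ^+ 2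
    = 2 * (enorm u * enorm v) * (enorm u * enorm v - S).
  transitivity (enorm v ^+ 2 * \sum_(i < d) (u ord0 i) ^+ 2 - 2 * (enorm u * enorm v) * S
                + enorm u ^+ 2 * \sum_(i < d) (v ord0 i) ^+ 2).
    rewrite /S !mulr_sumr -sumrB -big_split /=.
    by apply: eq_bigr => i _; ring.
  by rewrite -!enorm_sqr; ring.
have sq_ge0 : 0 <= \sum_(i < d) (enorm v * u ord0 i - enorm u * v ord0 i) ^+ 2.
  by apply: sumr_ge0 => i _; exact: sqr_ge0.
by move: sq_ge0; rewrite expand pmulr_rge0 ?mulr_gt0 // subr_ge0.
Qed.

(* Triangle inequality, from Cauchy-Schwarz by comparing squares. *)
Lemma enormD u v : enorm (u + v) <= enorm u + enorm v.
Proof.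
rewrite -ler_sqr ?nnegrE ?addr_ge0 ?enorm_ge0 //.
have -> : enorm (u + v) ^+ 2
    = enorm u ^+ 2 + 2 * \sum_(i < d) u ord0 i * v ord0 i + enorm v ^+ 2.
  rewrite !enorm_sqr mulr_sumr -!big_split /=.
  by apply: eq_bigr => i _; rewrite mxE; ring.
have := dot_le_enorm u v; nra.
Qed.

End EuclideanNorm.

Section Reparametrisation.
Context {R : realType}.
Implicit Types g : R -> R.

Definition rescale (u0 u1 u : R) : R := u0 + u * (u1 - u0).
Definition normalize (s0 s1 s : R) : R := (s - s0) / (s1 - s0).

Lemma rescaleK s0 s1 s : s0 != s1 -> rescale s0 s1 (normalize s0 s1 s) = s.
Proof. by move=> s01; rewrite /rescale /normalize divfK ?subr_eq0 1?eq_sym // addrC subrK. Qed.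

Lemma rescale_bounds u0 u1 u : u0 <= u1 -> 0 <= u <= 1 -> u0 <= rescale u0 u1 u <= u1.
Proof. by move=> u01 /andP[u_ge0 u_le1]; rewrite /rescale; apply/andP; split; nra. Qed.

Lemma homeo_le g s u : incr_homeo01 g -> 0 <= s -> s <= u -> u <= 1 -> g s <= g u.
Proof.
move=> [_ [g_incr _]] s0 su u1; have [->|su'] := eqVneq s u; first exact: lexx.
by apply/ltW/g_incr => //; rewrite lt_def eq_sym su'.
Qed.

Lemma homeo_in01 g u : incr_homeo01 g -> 0 <= u <= 1 -> 0 <= g u <= 1.
Proof.
move=> hg /andP[u0 u1]; have [_ [_ [g0 g1]]] := hg.
by apply/andP; split; [rewrite -{1}g0 | rewrite -{1}g1]; apply: homeo_le.
Qed.

Lemma within_continuous_precomp g f (D : set R) :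
  {within D, continuous g} -> continuous f -> (forall u, D u -> D (f u)) ->
  {within D, continuous (g \o f)}.
Proof.
move=> /subspace_continuousP g_cont f_cont fD.
apply/subspace_continuousP => x Dx.
have f_within : f @ within D (nbhs x) --> within D (nbhs (f x)).
  move=> W W_near; have /= near_x := f_cont x _ W_near.
  exact: filterS (fun u fW Du => fW (fD u Du)) near_x.
exact: cvg_comp f_within (g_cont _ (fD x Dx)).
Qed.

Lemma homeo_restrict g u0 u1 : incr_homeo01 g -> 0 <= u0 -> u0 < u1 -> u1 <= 1 ->
  incr_homeo01 (normalize (g u0) (g u1) \o g \o rescale u0 u1).
Proof.
move=> hg u0_ge0 u01 u1_le1; have [g_cont [g_incr [_ _]]] := hg.
have g01 : g u0 < g u1 by apply: g_incr.
have gap : 0 < g u1 - g u0 by rewrite subr_gt0.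
have rescale_in01 u : 0 <= u <= 1 -> 0 <= rescale u0 u1 u <= 1.
  move=> /(rescale_bounds u0 u1 u (ltW u01)) /andP[lo hi]; apply/andP; split; lra.
split; [|split; [|split]].
- apply: (@within_continuous_comp _ _ _ _ (g \o rescale u0 u1)).
    move=> y _; apply: cvgM; last exact: cvg_cst.
    by apply: cvgB; [exact: cvg_id | exact: cvg_cst].
  apply: within_continuous_precomp g_cont _ rescale_in01 => x.
  apply: cvgD; first exact: cvg_cst.
  by apply: cvgM; [exact: cvg_id | exact: cvg_cst].
- move=> s u s0 su u_le1; rewrite /= /normalize ltr_pM2r ?invr_gt0 // ltrD2r.
  apply: g_incr.
  + by case/andP: (rescale_in01 s (ltac:(apply/andP; split; lra))).
  + by rewrite /rescale ltrD2l ltr_pM2r ?subr_gt0.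
  + by case/andP: (rescale_in01 u (ltac:(apply/andP; split; lra))).
- by rewrite /= /rescale /normalize mul0r addr0 subrr mul0r.
- by rewrite /= /rescale /normalize mul1r (addrC u0) subrK divff // gt_eqF.
Qed.

End Reparametrisation.

Section FrechetSegments.
Context {R : realType} {d : nat}.
Implicit Types (A B : R -> 'rV[R]_d) (p q : 'rV[R]_d) (g : R -> R).

Lemma frechet_le_homeo A B g c :
  incr_homeo01 g -> (forall u, 0 <= u <= 1 -> enorm (A (g u) - B u) <= c) ->
  (frechet A B <= c%:E)%E.
Proof.
move=> hg bound.
apply: (@le_trans _ _ (ereal_sup [set (enorm (A (g u) - B u))%:E
                                  | u in [set x : R | 0 <= x <= 1]])).
  by apply: ereal_inf_lbound; exists g.
by apply: ge_ereal_sup => _ [u u01 <-]; rewrite lee_fin bound.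
Qed.

(* Conversely, below any strict upper bound of the Frechet distance there is
   a homeomorphism realising it (the infimum need not be attained). *)
Lemma frechet_lt_homeo A B c : (frechet A B < c%:E)%E ->
  exists2 g, incr_homeo01 g & forall u, 0 <= u <= 1 -> enorm (A (g u) - B u) <= c.
Proof.
case/ereal_inf_lt => _ [g hg <-] sup_lt; exists g => // u u01.
rewrite -lee_fin; apply/ltW/(le_lt_trans _ sup_lt).
by apply: ereal_sup_ubound; exists u.
Qed.

Lemma incr_homeo01_id : incr_homeo01 (@id R).
Proof. by split=> //; apply: continuous_subspaceT => x; exact: cvg_id. Qed.

Lemma frechet_eq0 A B : (forall s, A s = B s) -> (frechet A B <= 0%:E)%E.
Proof.
move=> AB; apply: (@frechet_le_homeo A B id 0 incr_homeo01_id) => u _.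
by rewrite AB subrr enorm0.
Qed.

Definition seg p q (s : R) : 'rV[R]_d := (1 - s) *: p + s *: q.

Lemma seg_rescale p q s0 s1 w :
  seg p q (rescale s0 s1 w) = seg (seg p q s0) (seg p q s1) w.
Proof. by apply/rowP => i; rewrite /rescale !mxE; ring. Qed.

(* Matching along the restriction of g, the error is the g-error at the
   current point plus the affine interpolation of the errors at u0 and u1. *)
Lemma frechet_chord_homeo p q B g u0 u1 c :
  incr_homeo01 g -> (forall u, 0 <= u <= 1 -> enorm (seg p q (g u) - B u) <= c) ->
  0 <= u0 -> u0 < u1 -> u1 <= 1 ->
  (frechet (seg (B u0) (B u1)) (B \o rescale u0 u1) <= (2 * c)%:E)%E.
Proof.
move=> hg bound u0_ge0 u01 u1_le1.
have g01 : g u0 < g u1 by have [_ [g_incr _]] := hg; apply: g_incr.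
set g' := normalize (g u0) (g u1) \o g \o rescale u0 u1.
have hg' : incr_homeo01 g' by exact: homeo_restrict.
apply: (frechet_le_homeo _ _ _ (2 * c) hg') => u u01'.
set w := g' u; set v := rescale u0 u1 u.
have /andP[w_ge0 w_le1] : 0 <= w <= 1 by exact: homeo_in01 hg' u01'.
have /andP[v_ge0 v_le1] : 0 <= v <= 1.
  have := rescale_bounds u0 u1 u (ltW u01) u01'.
  by rewrite -/v => /andP[lo hi]; apply/andP; split; lra.
have gv : g v = rescale (g u0) (g u1) w by rewrite rescaleK // lt_eqF.
have error_split : seg (B u0) (B u1) w - B v
    = (w - 1) *: (seg p q (g u0) - B u0) + (- w) *: (seg p q (g u1) - B u1)
      + (seg p q (g v) - B v).
  by rewrite gv seg_rescale; apply/rowP => i; rewrite !mxE; ring.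
have e0 := bound u0 ltac:(apply/andP; split; lra).
have e1 := bound u1 ltac:(apply/andP; split; lra).
have ev := bound v ltac:(apply/andP; split; lra).
rewrite /= -/w error_split.
apply: le_trans (enormD _ _) _; apply: le_trans (lerD (enormD _ _) (lexx _)) _.
rewrite !enormZ ler0_norm ?subr_le0 // normrN ger0_norm //; nra.
Qed.

Lemma frechet_chord p q B u0 u1 c :
  (frechet (seg p q) B <= c%:E)%E -> 0 <= u0 -> u0 < u1 -> u1 <= 1 ->
  (frechet (seg (B u0) (B u1)) (B \o rescale u0 u1) <= (2 * c)%:E)%E.
Proof.
move=> Fc u0_ge0 u01 u1_le1; apply/lee_addgt0Pr => e e_gt0.
have [g hg bound] : exists2 g, incr_homeo01 g &
    forall u, 0 <= u <= 1 -> enorm (seg p q (g u) - B u) <= c + e / 2.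
  by apply: frechet_lt_homeo; apply: le_lt_trans Fc _; rewrite lte_fin; lra.
rewrite -EFinD (_ : 2 * c + e = 2 * (c + e / 2)); last by field.
exact: frechet_chord_homeo hg bound u0_ge0 u01 u1_le1.
Qed.

End FrechetSegments.

Section PolygonalSegments.
Context {R : realType} {d : nat}.
Implicit Types (P : R -> 'rV[R]_d) (t : nat -> R).

Lemma breakpoints_le m t i j :
  breakpoints m t -> (1 <= i)%N -> (i <= j)%N -> (j <= m)%N -> t i <= t j.
Proof.
move=> [_ [_ t_incr]] i_ge1 ij j_le; have [->|ij'] := eqVneq i j; first exact: lexx.
by apply/ltW/t_incr => //; rewrite ltn_neqAle ij' ij.
Qed.

Lemma subcurve_rescale P a b a' b' : a < b ->
  subcurve P a b \o rescale (normalize a b a') (normalize a b b') = subcurve P a' b'.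
Proof.
move=> ab; apply/funext => u; rewrite /= /subcurve /rescale /normalize.
by congr P; field; rewrite subr_eq0 gt_eqF.
Qed.

Lemma subcurve_normalize P a b s : a < b -> subcurve P a b (normalize a b s) = P s.
Proof.
by move=> ab; rewrite /subcurve /normalize divfK ?subr_eq0 ?gt_eqF // addrC subrK.
Qed.

Lemma frechet_subcurve P a b a' b' c : a <= a' -> a' < b' -> b' <= b ->
  (frechet (seg (P a) (P b)) (subcurve P a b) <= c%:E)%E ->
  (frechet (seg (P a') (P b')) (subcurve P a' b') <= (2 * c)%:E)%E.
Proof.
move=> aa' ab' bb' Fc; have ab : a < b by apply: le_lt_trans aa' (lt_le_trans ab' bb').
have gap : 0 < b - a by rewrite subr_gt0.
have := frechet_chord _ _ _ (normalize a b a') (normalize a b b') _ Fc.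
rewrite subcurve_rescale // !subcurve_normalize //; apply.
- by apply: divr_ge0; rewrite subr_ge0 // ltW.
- by rewrite /normalize ltr_pM2r ?invr_gt0 // ltrD2r.
- by rewrite /normalize ler_pdivrMr // mul1r lerD2r.
Qed.

Lemma dseg_diag P t i : (dseg P t i i <= 0%:E)%E.
Proof.
apply: frechet_eq0 => s; rewrite /tau /subcurve subrr mulr0 addr0.
by rewrite -scalerDl subrK scale1r.
Qed.

Lemma dseg_inner m t P i j i' j' c : breakpoints m t -> 0 <= c ->
  (1 <= i)%N -> (i <= i')%N -> (i' <= j')%N -> (j' <= j)%N -> (j <= m)%N ->
  (dseg P t i j <= c%:E)%E -> (dseg P t i' j' <= (2 * c)%:E)%E.
Proof.
move=> bp c_ge0 i_ge1 ii' i'j' j'j j_le Fc.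
have [<-|i'j'_ne] := eqVneq i' j'.
  by apply: le_trans (dseg_diag P t i') _; rewrite lee_fin mulr_ge0.
have [_ [_ t_incr]] := bp.
apply: frechet_subcurve Fc.
- exact: breakpoints_le bp i_ge1 ii' (leq_trans i'j' (leq_trans j'j j_le)).
- by apply: t_incr; rewrite ?ltn_neqAle ?i'j'_ne; lia.
- exact: breakpoints_le bp (leq_trans i_ge1 (leq_trans ii' i'j')) j'j j_le.
Qed.

End PolygonalSegments.

Theorem mainTheorem3 (R : realType) (d : nat) (m : nat) (t : nat -> R)
    (P : R -> 'rV[R]_d) (Delta : R) :
  (1 <= d)%N -> 0 < Delta ->
  breakpoints m t -> polygonal m t P ->
  forall z : nat, (1 <= z)%N -> (z <= m - 1)%N ->
  forall xz yz : nat, is_xz P t Delta z xz -> is_yz P t Delta m z yz ->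
  ((forall x, (xz <= x)%N -> (x <= z)%N -> (dseg P t x z <= (4 * Delta)%:E)%E) /\
   (forall y, (z.+1 <= y)%N -> (y <= yz)%N -> (dseg P t z.+1 y <= (4 * Delta)%:E)%E)) /\
  ((forall x, (1 <= x)%N -> (x < xz)%N -> ((2 * Delta)%:E < dseg P t x z)%E) /\
   (forall y, (yz < y)%N -> (y <= m)%N -> ((2 * Delta)%:E < dseg P t z.+1 y)%E)).
Proof.
move=> _ Delta_gt0 bp _ z _ z_le_m1 xz yz [[_ [xz_le_z good_xz]] xz_min]
  [[z_lt_yz [_ good_yz]] yz_max].
have four : 4 * Delta = 2 * (2 * Delta) by ring.
have twoDelta_ge0 : 0 <= 2 * Delta by lra.
split; first by [].
(* (ii): a smaller x (larger y) with distance at most 2 Delta would, by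
   dseg_inner, make x (resp. y) admissible, contradicting the extremality. *)
split.
- move=> x x_ge1 x_lt; rewrite ltNge; apply/negP => Fx.
  suff xz_le_x : (xz <= x)%N by lia.
  apply: xz_min; split; [done | split; [lia |]] => x' xx' x'z.
  by rewrite four; apply: dseg_inner bp twoDelta_ge0 x_ge1 xx' x'z (leqnn z) _ Fx; lia.
- move=> y y_gt y_le; rewrite ltNge; apply/negP => Fy.
  suff y_le_yz : (y <= yz)%N by lia.
  apply: yz_max; split; [lia | split; [done |]] => y' zy' y'y.
  by rewrite four; apply: dseg_inner bp twoDelta_ge0 _ (leqnn _) zy' y'y y_le Fy; lia.
Qed.
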